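(* Suppose $f$ is twice differentiable at every point of $\mathbb{R}^{n\times p}$. Then for every $X\in\mathcal{S}_{n,p}$ and every $D\in\mathcal{T}_X$, $$\langle D,\nabla^2h(X)[D]\rangle=\langle D,\nabla^2f(X)[D]-D\Phi(X^\top\nabla f(X))\rangle .$$
   Context: $f:\mathbb{R}^{n\times p}\to\mathbb{R}$ is differentiable with $f,\nabla f$ locally Lipschitz. $\langle A,B\rangle=\mathrm{tr}(A^\top B)$, $\Phi(M):=\frac12(M+M^\top)$. $\mathcal{S}_{n,p}=\{X:X^\top X=I_p\}$, and for $X\in\mathcal{S}_{n,p}$ the tangent space is $\mathcal{T}_X:=\{D\in\mathbb{R}^{n\times p}:\Phi(D^\top X)=0\}$. $\mathcal{A}(X):=\frac32I_p-\frac12X^\top X$, $h(X):=f(X\mathcal{A}(X))+\frac\beta4\|X^\top X-I_p\|_F^2$ with $\beta>0$. *)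

From HB Require Import structures.
From mathcomp Require Import all_boot all_order all_algebra.
From mathcomp Require Import all_classical all_reals all_analysis.
Set Implicit Arguments. Unset Strict Implicit. Unset Printing Implicit Defensive.
Import Order.TTheory GRing.Theory Num.Theory.
Import numFieldNormedType.Exports.
Local Open Scope ring_scope.

Section Defs.
Variables (R : realType) (n p : nat).
Notation M := 'M[R]_(n, p).

Definition inner (A B : M) : R := \tr (A^T *m B).
Definition frob (A : M) : R := Num.sqrt (inner A A).
Definition sym (A : 'M[R]_p) : 'M[R]_p := 2^-1 *: (A + A^T).
Definition stiefel (X : M) : Prop := X^T *m X = 1%:M.
Definition tangent (X D : M) : Prop := sym (D^T *m X) = 0.
Definition Amap (X : M) : 'M[R]_p := (3 / 2) *: 1%:M - 2^-1 *: (X^T *m X).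
Definition hfun (f : M -> R) (beta : R) (X : M) : R :=
  f (X *m Amap X) + beta / 4 * (\tr ((X^T *m X - 1%:M)^T *m (X^T *m X - 1%:M))).
(* Euclidean gradient w.r.t. the Frobenius inner product: entry (i,j) is the
   partial derivative in direction of the elementary matrix E_ij *)
Definition grad (f : M -> R) (X : M) : M :=
  \matrix_(i, j) ('D_(delta_mx i j) f X).
Definition hess (f : M -> R) (X D : M) : M := 'd (grad f) X D.
Definition loc_lipschitz (V : normedModType R) (g : M -> V) : Prop :=
  forall X : M, exists r : R, exists L : R, 0 < r /\
    forall Y Z : M, frob (Y - X) < r -> frob (Z - X) < r ->
      `|g Y - g Z| <= L * frob (Y - Z).
End Defs.

(* Write G := grad f.  The quadratic form of the Hessian of h is the second
   derivative of h along D, i.e. the derivative at X in direction D of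
   Y |-> <grad h(Y), D>.  Differentiating A(Y) gives -sym(U^T Y), so
     <grad h(Y), U> = <G(Y A(Y)), U A(Y) - Y sym(U^T Y)>
                      + beta <Y^T Y - I, sym(U^T Y)>.
   At a Stiefel point A(X) = I and X^T X - I = 0, and for a tangent D also
   sym(D^T X) = 0; differentiating once more in direction D, every term
   carrying one of these factors vanishes, which leaves
     <grad^2 f(X)[D], D> - <G(X), X D^T D>.
   Finally <G, X D^T D> = <D, D sym(X^T G)> since D^T D is symmetric. *)

From HB Require Import structures.
From mathcomp Require Import all_boot all_order all_algebra.
From mathcomp Require Import all_classical all_reals all_analysis.
From mathcomp Require Import ring lra.
Import Order.TTheory GRing.Theory Num.Theory.
Import numFieldNormedType.Exports.
Local Open Scope ring_scope.
Set Implicit Arguments. Unset Strict Implicit. Unset Printing Implicit Defensive.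

Section MatrixCalculus.
Variables (R : realType) (V : normedModType R).

Lemma is_diff_sum (W : normedModType R) m (F dF : 'I_m -> V -> W) x :
  (forall k, is_diff x (F k) (dF k)) ->
  is_diff x (fun y => \sum_(k < m) F k y) (fun v => \sum_(k < m) dF k v).
Proof.
elim: m F dF => [|m IH] F dF HF.
  have -> : (fun y => \sum_(k < 0) F k y) = cst 0.
    by apply/funext => y; rewrite big_ord0.
  by apply: (is_diff_eq (is_diff_cst _ _)); apply/funext => v; rewrite big_ord0.
have -> : (fun y => \sum_(k < m.+1) F k y) =
    (fun y => \sum_(k < m) F (widen_ord (leqnSn m) k) y + F ord_max y).
  by apply/funext => y; rewrite big_ord_recr.
apply: (is_diff_eq (is_diffD (IH _ _ (fun k => HF _)) (HF ord_max))).
by apply/funext => v; rewrite big_ord_recr.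
Qed.

Lemma is_diffMl (k : R) (g dg : V -> R) x :
  is_diff x g dg -> is_diff x (fun y => k * g y) (fun v => k * dg v).
Proof.
move=> Hg; apply: (is_diff_eq (is_diffM (is_diff_cst k x) Hg)).
by apply/funext => v; rewrite -[RHS]addr0; congr (_ + _); rewrite /= scaler0.
Qed.

Lemma is_diffZl (W : normedModType R) (k dk : V -> R) (w : W) x :
  is_diff x k dk -> is_diff x (fun y => k y *: w) (fun v => dk v *: w).
Proof.
move=> Hk; apply: DiffDef; first exact: differentiableZl.
by rewrite diffZl // diff_val.
Qed.

Lemma is_diff_matrix m n (F dF : 'I_m -> 'I_n -> V -> R) x :
  (forall i j, is_diff x (F i j) (dF i j)) ->
  is_diff x (fun y => \matrix_(i, j) F i j y) (fun v => \matrix_(i, j) dF i j v).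
Proof.
move=> HF.
have -> : (fun y => \matrix_(i, j) F i j y) =
    (fun y => \sum_(i < m) \sum_(j < n) F i j y *: delta_mx i j).
  apply/funext => y; rewrite [LHS]matrix_sum_delta.
  by under eq_bigr do under eq_bigr do rewrite mxE.
apply: (is_diff_eq (is_diff_sum (fun i => is_diff_sum (fun j =>
  is_diffZl _ (HF i j))))).
apply/funext => v; rewrite [RHS]matrix_sum_delta.
by apply: eq_bigr => i _; apply: eq_bigr => j _; rewrite mxE.
Qed.

Definition mxentry m n (i : 'I_m) (j : 'I_n) (N : 'M[R]_(m, n)) : R := N i j.

Lemma mxentry_is_linear m n (i : 'I_m) (j : 'I_n) : linear (mxentry i j).
Proof. by move=> a A B; rewrite /mxentry !mxE. Qed.

HB.instance Definition _ m n (i : 'I_m) (j : 'I_n) :=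
  GRing.isLinear.Build R _ _ _ (mxentry i j) (mxentry_is_linear i j).

Lemma is_diff_mxentry m n (i : 'I_m) (j : 'I_n) (N : 'M[R]_(m, n)) :
  is_diff N (mxentry i j) (mxentry i j).
Proof.
have cont : continuous (mxentry i j) by exact: coord_continuous.
by apply: DiffDef; [exact: linear_differentiable | rewrite diff_lin].
Qed.

Lemma is_diff_entry m n (F dF : V -> 'M[R]_(m, n)) x i j :
  is_diff x F dF -> is_diff x (fun y => F y i j) (fun v => dF v i j).
Proof. by move=> HF; exact: (is_diff_comp HF (is_diff_mxentry i j (F x))). Qed.

Lemma is_diff_mulmx a b c (A dA : V -> 'M[R]_(a, b)) (B dB : V -> 'M[R]_(b, c)) x :
  is_diff x A dA -> is_diff x B dB ->
  is_diff x (fun y => A y *m B y) (fun v => dA v *m B x + A x *m dB v).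
Proof.
move=> HA HB.
have -> : (fun y => A y *m B y) = (fun y => \matrix_(i, j) \sum_k A y i k * B y k j).
  by apply/funext => y; apply/matrixP => i j; rewrite !mxE.
apply: (is_diff_eq (is_diff_matrix (fun i j => is_diff_sum (fun k =>
  is_diffM (is_diff_entry i k HA) (is_diff_entry k j HB))))).
apply/funext => v; apply/matrixP => i j; rewrite !mxE -big_split.
by apply: eq_bigr => k _; rewrite addrC; congr (_ + _); apply: mulrC.
Qed.

Lemma is_diff_trmx m n (A dA : V -> 'M[R]_(m, n)) x :
  is_diff x A dA -> is_diff x (fun y => (A y)^T) (fun v => (dA v)^T).
Proof.
move=> HA; have -> : (fun y => (A y)^T) = (fun y => \matrix_(i, j) A y j i).
  by apply/funext => y; apply/matrixP => i j; rewrite !mxE.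
apply: (is_diff_eq (is_diff_matrix (fun i j => is_diff_entry j i HA))).
by apply/funext => v; apply/matrixP => i j; rewrite !mxE.
Qed.

Lemma is_diff_mxtrace m (A dA : V -> 'M[R]_m) x :
  is_diff x A dA -> is_diff x (fun y => \tr (A y)) (fun v => \tr (dA v)).
Proof. by move=> HA; exact: (is_diff_sum (fun i => is_diff_entry i i HA)). Qed.

Lemma is_diff_inner m n (A dA B dB : V -> 'M[R]_(m, n)) x :
  is_diff x A dA -> is_diff x B dB ->
  is_diff x (fun y => inner (A y) (B y))
    (fun v => inner (dA v) (B x) + inner (A x) (dB v)).
Proof.
move=> HA HB; apply: (is_diff_eq (is_diff_mxtrace (is_diff_mulmx (is_diff_trmx HA) HB))).
by apply/funext => v; rewrite /inner mxtraceD.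
Qed.

Lemma is_diff_sym p (A dA : V -> 'M[R]_p) x :
  is_diff x A dA -> is_diff x (fun y => sym (A y)) (fun v => sym (dA v)).
Proof. by move=> HA; apply: is_diffZ; apply: is_diffD => //; exact: is_diff_trmx. Qed.

End MatrixCalculus.

Section FrobeniusInner.
Variables (R : realType) (m q : nat).
Implicit Types A B C : 'M[R]_(m, q).

Lemma inner_sum A B : inner A B = \sum_i \sum_j A i j * B i j.
Proof.
rewrite /inner /mxtrace; under eq_bigr do rewrite mxE.
by rewrite exchange_big; apply: eq_bigr => i _; apply: eq_bigr => j _; rewrite mxE.
Qed.

Lemma innerC A B : inner A B = inner B A.
Proof. by rewrite /inner -mxtrace_tr trmx_mul trmxK. Qed.

Lemma inner0l A : inner 0 A = 0.
Proof. by rewrite /inner trmx0 mul0mx mxtrace0. Qed.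

Lemma innerZl k A B : inner (k *: A) B = k * inner A B.
Proof. by rewrite /inner linearZ /= -scalemxAl mxtraceZ. Qed.

Lemma innerNr A B : inner A (- B) = - inner A B.
Proof. by rewrite /inner mulmxN linearN. Qed.

Lemma innerBr A B C : inner A (B - C) = inner A B - inner A C.
Proof. by rewrite /inner mulmxBr linearB. Qed.

End FrobeniusInner.

Section GradientHessian.
Variables (R : realType) (n p : nat).
Implicit Types (F : 'M[R]_(n, p) -> R) (X D : 'M[R]_(n, p)).

Lemma linear_sum_delta (L : {linear 'M[R]_(n, p) -> R}) D :
  L D = \sum_i \sum_j D i j * L (delta_mx i j).
Proof.
rewrite {1}(matrix_sum_delta D) linear_sum; apply: eq_bigr => i _.
by rewrite linear_sum; apply: eq_bigr => j _; rewrite linearZ.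
Qed.

Lemma grad_diffE F X : differentiable F X ->
  grad F X = \matrix_(i, j) 'd F X (delta_mx i j).
Proof. by move=> dF; apply/matrixP => i j; rewrite !mxE deriveE. Qed.

Lemma diff_grad F X D : differentiable F X -> 'd F X D = inner (grad F X) D.
Proof.
move=> dF; rewrite linear_sum_delta inner_sum grad_diffE //.
by apply: eq_bigr => i _; apply: eq_bigr => j _; rewrite mxE mulrC.
Qed.

Lemma inner_hess F X D :
  (forall Y, differentiable F Y) ->
  (forall U, differentiable (fun Y => 'd F Y U) X) ->
  inner D (hess F X D) = 'd (fun Y => 'd F Y D) X D.
Proof.
move=> dF d2F; rewrite /hess.
have -> : grad F = fun Y => \matrix_(i, j) 'd F Y (delta_mx i j).
  by apply/funext => Y; exact: grad_diffE.
have [_ ->] := is_diff_matrix (fun i j => differentiableP (d2F (delta_mx i j))).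
have [_ dDF] : is_diff X (fun Y => 'd F Y D)
    (fun v => \sum_i \sum_j D i j * 'd (fun Y => 'd F Y (delta_mx i j)) X v).
  have -> : (fun Y => 'd F Y D) = fun Y => \sum_i \sum_j D i j * 'd F Y (delta_mx i j).
    by apply/funext => Y; exact: linear_sum_delta.
  exact: is_diff_sum (fun i => is_diff_sum (fun j =>
    is_diffMl (D i j) (differentiableP (d2F (delta_mx i j))))).
(* [in RHS]: matching the differential on the left side does not terminate in practice *)
rewrite [in RHS]dDF inner_sum.
by apply: eq_bigr => i _; apply: eq_bigr => j _; rewrite mxE.
Qed.

End GradientHessian.

Section Stiefel.
Variables (R : realType) (n p : nat).
Implicit Types (X Y D U G : 'M[R]_(n, p)).

Lemma sym_trmx_mul U Y : sym (U^T *m Y) = 2^-1 *: (U^T *m Y + Y^T *m U).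
Proof. by rewrite /sym trmx_mul trmxK. Qed.

Lemma sym_gram D : sym (D^T *m D) = D^T *m D.
Proof.
rewrite sym_trmx_mul -mulr2n -scalerMnr scalerMnl -mulr_natr.
by rewrite mulVf ?pnatr_eq0 // scale1r.
Qed.

Lemma inner_mulmx_sym D X G :
  inner D (D *m sym (X^T *m G)) = inner G (X *m (D^T *m D)).
Proof.
have tr_tr : \tr (D^T *m D *m (X^T *m G)) = inner G (X *m (D^T *m D)).
  by rewrite /inner -mxtrace_tr !trmx_mul !trmxK !mulmxA.
have tr_cyc : \tr (D^T *m D *m (G^T *m X)) = inner G (X *m (D^T *m D)).
  by rewrite mxtrace_mulC /inner !mulmxA.
rewrite /inner mulmxA sym_trmx_mul -scalemxAr mxtraceZ mulmxDr mxtraceD.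
by rewrite tr_tr tr_cyc /inner; lra.
Qed.

Lemma Amap_stiefel X : stiefel X -> Amap X = 1%:M.
Proof.
move=> sX; rewrite /Amap sX -scalerBl.
have -> : (3 / 2 - 2^-1 : R) = 1 by lra.
exact: scale1r.
Qed.

Lemma is_diff_Amap Y : is_diff Y (@Amap R n p) (fun U => - sym (U^T *m Y)).
Proof.
apply: (is_diff_eq (is_diffB (is_diff_cst _ Y)
  (is_diffZ _ (is_diff_mulmx (is_diff_trmx (is_diff_id Y)) (is_diff_id Y))))).
by apply/funext => U; rewrite /= sub0r sym_trmx_mul.
Qed.

Lemma is_diff_mulmx_Amap Y :
  is_diff Y (fun Z => Z *m Amap Z) (fun U => U *m Amap Y - Y *m sym (U^T *m Y)).
Proof.
apply: (is_diff_eq (is_diff_mulmx (is_diff_id Y) (is_diff_Amap Y))).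
by apply/funext => U; rewrite mulmxN.
Qed.

Lemma is_diff_gramB1 Y :
  is_diff Y (fun Z => Z^T *m Z - 1%:M) (fun U => 2 *: sym (U^T *m Y)).
Proof.
apply: (is_diff_eq (is_diffB (is_diff_mulmx (is_diff_trmx (is_diff_id Y))
  (is_diff_id Y)) (is_diff_cst 1%:M Y))).
apply/funext => U; rewrite sym_trmx_mul scalerA mulfV ?pnatr_eq0 //.
by rewrite scale1r /= subr0.
Qed.

End Stiefel.

Section ConstraintDissolving.
Variables (R : realType) (n p : nat) (f : 'M[R]_(n, p) -> R) (beta : R).
Hypothesis df : forall X, differentiable f X.
Implicit Types (X Y D U : 'M[R]_(n, p)).

Lemma is_diff_hfun Y :
  is_diff Y (hfun f beta) (fun U =>
    'd f (Y *m Amap Y) (U *m Amap Y - Y *m sym (U^T *m Y)) +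
    beta * inner (Y^T *m Y - 1%:M) (sym (U^T *m Y))).
Proof.
apply: (is_diff_eq (is_diffD
  (is_diff_comp (is_diff_mulmx_Amap Y) (differentiableP (df _)))
  (is_diffMl (beta / 4) (is_diff_inner (is_diff_gramB1 Y) (is_diff_gramB1 Y))))).
apply/funext => U; congr (_ + _).
rewrite [inner (_ - _) _]innerC !(innerZl 2) [inner (_ - _) _]innerC.
by field.
Qed.

Lemma diff_hfun Y U :
  'd (hfun f beta) Y U =
  inner (grad f (Y *m Amap Y)) (U *m Amap Y - Y *m sym (U^T *m Y)) +
  beta * inner (Y^T *m Y - 1%:M) (sym (U^T *m Y)).
Proof. by have [_ ->] := is_diff_hfun Y; rewrite /= diff_grad. Qed.

Hypothesis dG : forall X, differentiable (grad f) X.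

Lemma is_diff_diff_hfun X U :
  is_diff X (fun Y => 'd (hfun f beta) Y U) (fun v =>
    inner ('d (grad f) (X *m Amap X) (v *m Amap X - X *m sym (v^T *m X)))
      (U *m Amap X - X *m sym (U^T *m X)) -
    inner (grad f (X *m Amap X))
      (U *m sym (v^T *m X) + v *m sym (U^T *m X) + X *m sym (U^T *m v)) +
    beta * (inner (2 *: sym (v^T *m X)) (sym (U^T *m X)) +
            inner (X^T *m X - 1%:M) (sym (U^T *m v)))).
Proof.
have -> : (fun Y => 'd (hfun f beta) Y U) = fun Y =>
    inner (grad f (Y *m Amap Y)) (U *m Amap Y - Y *m sym (U^T *m Y)) +
    beta * inner (Y^T *m Y - 1%:M) (sym (U^T *m Y)).
  by apply/funext => Y; exact: diff_hfun.
have dsym := is_diff_sym (is_diff_mulmx (is_diff_cst U^T X) (is_diff_id X)).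
have ddir := is_diffB (is_diff_mulmx (is_diff_cst U X) (is_diff_Amap X))
  (is_diff_mulmx (is_diff_id X) dsym).
apply: (is_diff_eq (is_diffD
  (is_diff_inner (is_diff_comp (is_diff_mulmx_Amap X) (differentiableP (dG _))) ddir)
  (is_diffMl beta (is_diff_inner (is_diff_gramB1 X) dsym)))).
apply/funext => v; congr (_ + _); last by rewrite /= mul0mx add0r.
congr (_ + _); rewrite -innerNr; congr (inner _ _).
by rewrite !fctE !mul0mx !add0r mulmxN !opprD addrA.
Qed.

Lemma diff2_hfun_tangent X D : stiefel X -> tangent X D ->
  'd (fun Y => 'd (hfun f beta) Y D) X D =
  inner ('d (grad f) X D) D - inner (grad f X) (X *m (D^T *m D)).
Proof.
move=> sX tD; have [_ ->] := is_diff_diff_hfun X D.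
rewrite Amap_stiefel // !mulmx1 sX subrr tD sym_gram !mulmx0 subr0 !add0r.
by rewrite scaler0 !inner0l addr0 mulr0 addr0.
Qed.

End ConstraintDissolving.

(* The identity holds pointwise for every beta. *)
Theorem mainTheorem10 (R : realType) (n p : nat) (f : 'M[R]_(n, p) -> R) (beta : R) :
  0 < beta ->
  (forall X, differentiable f X) ->
  loc_lipschitz f -> loc_lipschitz (grad f) ->
  (forall X, differentiable (grad f) X) ->
  forall X D : 'M[R]_(n, p), stiefel X -> tangent X D ->
    inner D (hess (hfun f beta) X D) =
    inner D (hess f X D - D *m sym (X^T *m grad f X)).
Proof.
move=> _ df _ _ dG X D sX tD.
rewrite inner_hess; first last.
- by move=> U; have [] := is_diff_diff_hfun beta df dG X U.
- by move=> Y; have [] := is_diff_hfun beta df Y.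
by rewrite diff2_hfun_tangent // innerBr inner_mulmx_sym [inner D _]innerC.
Qed.
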